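(* Let $\mathcal{P}\subset\mathbb{R}^d$ be a polytope (cage) with $K$ vertices $v_1,\dots,v_K$, and let $\alpha=(\alpha_1,\dots,\alpha_K)^\top:\mathcal{P}\to\mathbb{R}^K$ be any valid generalized barycentric coordinate function for $\mathcal{P}$. Then for every $x\in\mathcal{P}$, the vector $\alpha(x)$ is a convex combination of simplex barycentric coordinate vectors $\alpha(x;\mathcal{P},T)$, where $T$ ranges over the simplices whose vertices are cage vertices of $\mathcal{P}$; that is, there exist weights $w_T(x)\ge 0$ with $\sum_T w_T(x)=1$ such that $\alpha(x)=\sum_T w_T(x)\,\alpha(x;\mathcal{P},T)$.
   Context: A function $\alpha:\mathcal{P}\to\mathbb{R}^K$ is a valid generalized barycentric coordinate function for $\mathcal{P}$ if for all $x\in\mathcal{P}$: (non-negativity) $\alpha_i(x)\ge 0$ for all $i$; (partition of unity) $\sum_i\alpha_i(x)=1$; (reproduction) $\sum_i \alpha_i(x)\,v_i = x$; and (Lagrange property) $\alpha_i(v_j)=\delta_{ij}$ for all $i,j$. For a non-degenerate (nonzero volume) simplex $T$ in $\mathbb{R}^d$ with vertex set $\{v_{l_0},\dots,v_{l_d}\}\subseteq\{v_1,\dots,v_K\}$ containing $x$, the simplex barycentric coordinates $\alpha(x;T)\in\mathbb{R}^{d+1}$ are the unique solution $\lambda$ of $\sum_{k}\lambda_k v_{l_k}=x$, $\sum_k\lambda_k=1$; the cage coordinates due to $T$, $\alpha(x;\mathcal{P},T)\in\mathbb{R}^K$, have entry $i$ equal to the simplex coordinate of $x$ associated with $v_i$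 if $v_i$ is a vertex of $T$, and $0$ otherwise. *)

From HB Require Import structures.
From mathcomp Require Import all_boot all_order all_algebra.
From Stdlib Require Import ClassicalEpsilon.
Set Implicit Arguments. Unset Strict Implicit. Unset Printing Implicit Defensive.
Import Order.TTheory GRing.Theory Num.Theory.
Local Open Scope ring_scope.

Section Cage.
Variables (R : realFieldType) (d K : nat) (v : 'I_K -> 'rV[R]_d).

Definition in_hull (S : {set 'I_K}) (x : 'rV[R]_d) : Prop :=
  exists lam : 'I_K -> R,
    [/\ forall i, 0 <= lam i, forall i, i \notin S -> lam i = 0,
        \sum_i lam i = 1 & \sum_i lam i *: v i = x].

Definition in_cage (x : 'rV[R]_d) : Prop := in_hull setT x.

Definition extreme_point (p : 'rV[R]_d) : Prop :=
  in_cage p /\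
  forall (a b : 'rV[R]_d) (t : R), in_cage a -> in_cage b -> 0 < t < 1 ->
    p = t *: a + (1 - t) *: b -> a = p /\ b = p.

Definition polytope_vertices : Prop :=
  injective v /\ (forall i, extreme_point (v i)).

Definition full_dimensional : Prop :=
  forall y : 'rV[R]_d, exists c : 'I_K -> R,
    \sum_i c i = 1 /\ \sum_i c i *: v i = y.

Definition valid_gbc (alpha : 'rV[R]_d -> 'I_K -> R) : Prop :=
  [/\ forall x, in_cage x -> forall i, 0 <= alpha x i,
      forall x, in_cage x -> \sum_i alpha x i = 1,
      forall x, in_cage x -> \sum_i alpha x i *: v i = x
    & forall i j, alpha (v j) i = (i == j)%:R].

Definition nondeg_simplex (S : {set 'I_K}) : Prop :=
  #|S| = d.+1 /\
  forall c : 'I_K -> R, (forall i, i \notin S -> c i = 0) ->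
    \sum_i c i = 0 -> \sum_i c i *: v i = 0 -> forall i, c i = 0.

Definition is_cage_coords (S : {set 'I_K}) (x : 'rV[R]_d) (c : 'I_K -> R) :
  Prop :=
  [/\ forall i, i \notin S -> c i = 0, \sum_i c i = 1 &
      \sum_i c i *: v i = x].

(* alpha(x; P, T): the (unique, for non-degenerate T) solution *)
Definition cage_coords (S : {set 'I_K}) (x : 'rV[R]_d) : 'I_K -> R :=
  epsilon (inhabits (fun _ : 'I_K => 0)) (is_cage_coords S x).

End Cage.

(* Write alpha(x) as convex weights lam of the cage vertices with
   sum_i lam_i v_i = x.  If the support of lam is affinely dependent, an affine
   dependence c lets us move lam in the directions c and -c until a coordinate
   vanishes; lam is a convex combination of the two endpoints, whose supports
   are smaller (Caratheodory).  If the support is affinely independent, it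
   extends, the cage being full-dimensional, to d+1 affinely independent
   vertices, i.e. a non-degenerate simplex T, and by uniqueness lam is exactly
   alpha(x; P, T). *)

From mathcomp Require Import all_boot all_order all_algebra.
From mathcomp Require Import ring.
From Stdlib Require Import Classical ClassicalEpsilon.
Set Implicit Arguments. Unset Strict Implicit. Unset Printing Implicit Defensive.
Import Order.TTheory GRing.Theory Num.Theory.
Local Open Scope ring_scope.

Section LinearIndependence.
Variables (F : fieldType) (vT : vectType F) (I : finType) (u : I -> vT).

Definition lin_indep (S : {set I}) : Prop :=
  forall c : I -> F, (forall i, i \notin S -> c i = 0) ->
    \sum_i c i *: u i = 0 -> forall i, c i = 0.

Lemma sum_on_image S (c : I -> F) : (forall i, i \notin S -> c i = 0) ->
  \sum_i c i *: u i = \sum_(l < #|S|) c (enum_val l) *: [seq u i | i in S]`_l.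
Proof.
move=> c0; rewrite (bigID (mem S)) /= [X in _ + X]big1 ?addr0; last first.
  by move=> i /c0 ->; rewrite scale0r.
by rewrite big_enum_val; apply: eq_bigr => l _; rewrite (nth_image 0).
Qed.

Lemma lin_indepP S : reflect (lin_indep S) (free [seq u i | i in S]).
Proof.
apply: (iffP (freeP (X := image_tuple u S))).
  move=> free_u c c0 cu i.
  have [iS|/c0 //] := boolP (i \in S).
  rewrite -(enum_rankK_in iS iS); apply: (free_u (c \o enum_val)).
  by rewrite -sum_on_image.
move=> indS k k0 l.
pose c i := if i \in S then k (enum_rank_in (enum_valP l) i) else 0.
have cE m : c (enum_val m) = k m by rewrite /c enum_valP enum_valK_in.
have c0 i : i \notin S -> c i = 0 by rewrite /c => /negPf ->.
rewrite -cE; apply: indS => //; rewrite (sum_on_image c0) -[RHS]k0.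
by apply: eq_bigr => m _; rewrite cE.
Qed.

Lemma lin_indep_card S : lin_indep S -> (#|S| <= \dim {:vT})%N.
Proof.
move=> /lin_indepP/eqP dimS.
by rewrite -(size_image u) -dimS dimvS ?subvf.
Qed.

Lemma lin_indep_setU1 S j : lin_indep S ->
  u j \notin <<[seq u i | i in S]>>%VS -> lin_indep (j |: S).
Proof.
move=> indS uj c c0 cu.
have cj : c j = 0.
  apply: contraNeq uj => cj.
  have cujE : c j *: u j = - \sum_(i | i != j) c i *: u i.
    by apply/eqP; rewrite -addr_eq0 -(bigD1 j (P := xpredT)) ?cu.
  rewrite -[u j]scale1r -(mulVf cj) -scalerA cujE memvZ // memvN.
  rewrite memv_suml // => i ij; have [iS|iS] := boolP (i \in S).
    by rewrite memvZ // memv_span // image_f.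
  by rewrite c0 ?scale0r ?mem0v // in_setU1 negb_or ij.
apply: indS cu => i iS; have [->|ij] := eqVneq i j; first exact: cj.
by rewrite c0 // in_setU1 negb_or ij.
Qed.

Lemma lin_indep_extend S0 : lin_indep S0 -> <<codom u>>%VS = fullv ->
  exists2 S : {set I}, S0 \subset S & lin_indep S /\ #|S| = \dim {:vT}.
Proof.
move=> /lin_indepP indS0 span_u.
pose P := [pred S : {set I} | (S0 \subset S) && free [seq u i | i in S]].
have P0 : P S0 by rewrite inE subxx indS0.
case: (@arg_maxnP _ S0 P (fun S => #|S|) P0).
move=> S /andP[S0S /lin_indepP indS] maxS.
exists S => //; split => //.
have span_S : <<[seq u i | i in S]>>%VS = fullv.
  apply/eqP; rewrite eqEsubv subvf -span_u; apply/span_subvP => _ /codomP[j ->].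
  apply: contraT => uj.
  have jS : j \notin S by apply: contra uj => jS; rewrite memv_span ?image_f.
  have /maxS : P (j |: S).
    rewrite inE (subset_trans S0S (subsetU1 _ _)).
    exact/lin_indepP/lin_indep_setU1.
  by rewrite /= cardsU1 jS add1n ltnn.
apply/eqP; rewrite eqn_leq lin_indep_card //=.
by have := dim_span [seq u i | i in S]; rewrite span_S size_image.
Qed.

End LinearIndependence.

Section Support.
Variables (R : realFieldType) (I : finType).

Definition supp (lam : I -> R) : {set I} := [set i | lam i != 0].

Lemma sum_eq0_exists_neg (c : I -> R) i0 :
  \sum_i c i = 0 -> c i0 != 0 -> exists i, c i < 0.
Proof.
move=> c_sum ci0; apply/existsP; apply: contraNT ci0 => /existsPn c_ge0.
apply/eqP; apply: (psumr_eq0P (P := xpredT)) => // i _.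
by rewrite leNgt c_ge0.
Qed.

Lemma nonneg_push_to_boundary (lam c : I -> R) :
  (forall i, 0 <= lam i) -> (forall i, lam i = 0 -> c i = 0) ->
  (exists i, c i < 0) ->
  exists2 s : R, 0 < s & (forall i, 0 <= lam i + s * c i) /\
    (#|supp (fun i => (lam i + s * c i)%R)| < #|supp lam|)%N.
Proof.
move=> lam_ge0 c0 [i0 ci0].
pose ratio i := lam i / - c i.
have [j cj ratio_min] := @arg_minP _ _ _ i0 (fun i => c i < 0) ratio ci0.
have lamj : 0 < lam j.
  by rewrite lt0r lam_ge0 andbT; apply: contraTneq cj => /c0 ->; rewrite ltxx.
exists (ratio j); first by rewrite divr_gt0 // oppr_gt0.
split.
  move=> k; have [ck|] := ltrP (c k) 0; last first.
    by move=> ck; rewrite addr_ge0 // mulr_ge0 // divr_ge0 ?oppr_ge0 // ltW.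
  have nck : 0 < - c k by rewrite oppr_gt0.
  have := ratio_min k ck; rewrite /ratio -(ler_pM2r nck) divfK ?lt0r_neq0 //.
  by rewrite mulrN -subr_ge0 opprK.
apply: proper_card; apply/properP; split.
  apply/subsetP => k; rewrite !inE; apply: contra => /eqP lamk.
  by rewrite lamk c0 // mulr0 addr0.
exists j; first by rewrite inE lt0r_neq0.
by rewrite inE negbK /ratio invrN mulrN mulNr divfK ?subrr // lt_eqF.
Qed.

End Support.

Section Cage.
Variables (R : realFieldType) (d K : nat) (v : 'I_K -> 'rV[R]_d).

Definition aff_indep (S : {set 'I_K}) : Prop :=
  forall c : 'I_K -> R, (forall i, i \notin S -> c i = 0) ->
    \sum_i c i = 0 -> \sum_i c i *: v i = 0 -> forall i, c i = 0.

Definition homog (p : 'rV[R]_d) : 'rV[R]_(1 + d) := row_mx 1%:M p.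

Lemma sum_homog (c : 'I_K -> R) :
  \sum_i c i *: homog (v i) = row_mx (\sum_i c i)%:M (\sum_i c i *: v i).
Proof.
rewrite -[LHS]hsubmxK !raddf_sum /=; congr row_mx; apply: eq_bigr => i _.
  by rewrite /homog scale_row_mx row_mxKl scale_scalar_mx mulr1.
by rewrite /homog scale_row_mx row_mxKr.
Qed.

Lemma sum_homog_eq0 (c : 'I_K -> R) :
  \sum_i c i *: homog (v i) = 0 <-> \sum_i c i = 0 /\ \sum_i c i *: v i = 0.
Proof.
rewrite sum_homog; split => [/eqP|[-> ->]]; last by rewrite raddf0 row_mx0.
rewrite row_mx_eq0 => /andP[/eqP/(congr1 (fun M : 'M_1 => M 0 0)) + /eqP ->].
by rewrite !mxE eqxx mulr1n.
Qed.

Lemma aff_indep_homog S : aff_indep S <-> lin_indep (homog \o v) S.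
Proof.
split=> [indS c c0 /sum_homog_eq0[]|indS c c0 c_sum cv]; first exact: indS.
by apply: indS => //; apply/sum_homog_eq0.
Qed.

Lemma full_dimensional_span : full_dimensional v ->
  <<codom (homog \o v)>>%VS = fullv.
Proof.
move=> full; apply/eqP; rewrite eqEsubv subvf /=; apply/subvP => z _.
have comb_in c : \sum_i c i *: homog (v i) \in <<codom (homog \o v)>>%VS.
  by apply: memv_suml => i _; rewrite memvZ // memv_span // codom_f.
have [c [c1 cv]] := full (rsubmx z).
have [e [e1 e0]] := full 0.
suff -> : z = \sum_i c i *: homog (v i)
              + (z 0 0 - 1) *: \sum_i e i *: homog (v i).
  by rewrite memvD ?memvZ.
rewrite !sum_homog c1 cv e1 e0 scale_row_mx add_row_mx scaler0 addr0.
rewrite -[LHS]hsubmxK; congr row_mx; apply/rowP => j.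
rewrite ord1 !mxE eqxx mulr1n mulr1 addrC subrK.
by congr (z 0 _); apply: val_inj.
Qed.

Lemma aff_indep_extend S0 : full_dimensional v -> aff_indep S0 ->
  exists2 S : {set 'I_K}, S0 \subset S & nondeg_simplex v S.
Proof.
move=> /full_dimensional_span span_v /aff_indep_homog indS0.
have [S S0S [/aff_indep_homog indS cardS]] := lin_indep_extend indS0 span_v.
by exists S => //; split; rewrite // cardS dimvf dim_matrix; apply: mul1n.
Qed.

Lemma cage_coords_uniq S x lam : aff_indep S -> is_cage_coords v S x lam ->
  cage_coords v S x =1 lam.
Proof.
move=> indS lamS; have [c0 c_sum cv] : is_cage_coords v S x (cage_coords v S x).
  by apply: epsilon_spec; exists lam.
case: lamS => lam0 lam_sum lamv i; apply/eqP; rewrite -subr_eq0; apply/eqP.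
apply: (indS (fun i => cage_coords v S x i - lam i)) => [j jS||].
- by rewrite c0 ?lam0 ?subrr.
- by rewrite sumrB c_sum lam_sum subrr.
- rewrite (eq_bigr (fun i => cage_coords v S x i *: v i - lam i *: v i)).
    by rewrite sumrB cv lamv subrr.
  by move=> j _; rewrite scalerBl.
Qed.

Definition convex_weights x (lam : 'I_K -> R) : Prop :=
  [/\ forall i, 0 <= lam i, \sum_i lam i = 1 & \sum_i lam i *: v i = x].

Definition simplex_mixture x (lam : 'I_K -> R) : Prop :=
  exists w : {set 'I_K} -> R,
    [/\ forall T, 0 <= w T,
        forall T, w T != 0 -> nondeg_simplex v T /\ in_hull v T x,
        \sum_T w T = 1
      & forall i, lam i = \sum_T w T * cage_coords v T x i].

Lemma simplex_mixture_conv x (a b lam : 'I_K -> R) t :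
  simplex_mixture x a -> simplex_mixture x b -> 0 <= t <= 1 ->
  (forall i, lam i = t * a i + (1 - t) * b i) -> simplex_mixture x lam.
Proof.
move=> [wa [wa0 waS wa1 waE]] [wb [wb0 wbS wb1 wbE]] /andP[t0 t1] lamE.
exists (fun T => t * wa T + (1 - t) * wb T); split.
- by move=> T; rewrite addr_ge0 // mulr_ge0 // subr_ge0.
- move=> T; have [waT|/waS//] := eqVneq (wa T) 0.
  have [wbT|/wbS//] := eqVneq (wb T) 0.
  by rewrite waT wbT !mulr0 addr0 eqxx.
- by rewrite big_split /= -!mulr_sumr wa1 wb1 !mulr1 addrC subrK.
- move=> i; rewrite lamE waE wbE !mulr_sumr -big_split /=.
  by apply: eq_bigr => T _; ring.
Qed.

Lemma simplex_mixture_aff_indep x lam : full_dimensional v ->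
  convex_weights x lam -> aff_indep (supp lam) -> simplex_mixture x lam.
Proof.
move=> full [lam0 lam1 lamv] /(aff_indep_extend full)[S suppS [cardS indS]].
have lamS : is_cage_coords v S x lam.
  split => // i; apply: contraNeq => lami; apply: (subsetP suppS).
  by rewrite inE.
exists (fun T => (T == S)%:R); split.
- by move=> T; rewrite ler0n.
- move=> T; have [-> _|] := eqVneq T S; last by rewrite eqxx.
  by split; [split | exists lam; case: lamS].
- by rewrite (bigD1 S) //= eqxx big1 ?addr0 // => T /negPf ->.
- move=> i; rewrite (bigD1 S) //= eqxx mul1r (cage_coords_uniq indS lamS).
  rewrite big1 ?addr0 //.
  by move=> T /negPf ->; rewrite mul0r.
Qed.

Lemma convex_weights_shift x lam c s : convex_weights x lam ->
  \sum_i c i = 0 -> \sum_i c i *: v i = 0 -> (forall i, 0 <= lam i + s * c i) ->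
  convex_weights x (fun i => lam i + s * c i).
Proof.
move=> [_ lam1 lamv] c_sum cv ge0; split => //.
  by rewrite big_split /= -mulr_sumr c_sum mulr0 addr0.
under eq_bigr do rewrite scalerDl -scalerA.
by rewrite big_split /= -scaler_sumr cv scaler0 addr0.
Qed.

Lemma convex_weights_simplex_mixture x lam : full_dimensional v ->
  convex_weights x lam -> simplex_mixture x lam.
Proof.
move=> full; have [n] := ubnP #|supp lam|; elim: n lam => // n IH lam.
rewrite ltnS => supp_lam lamw; have [lam_ge0 _ _] := lamw.
have [[c [c0 c_sum cv [i0 ci0]]]|indep] := classic (exists c : 'I_K -> R,
  [/\ forall i, lam i = 0 -> c i = 0, \sum_i c i = 0, \sum_i c i *: v i = 0
    & exists i, c i != 0]); last first.
  apply: simplex_mixture_aff_indep => // c c0 c_sum cv i.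
  apply/eqP/contraT => ci; case: indep; exists c; split => // [j lamj|].
    by apply: c0; rewrite inE lamj eqxx.
  by exists i.
have shift (e : 'I_K -> R) : (forall i, lam i = 0 -> e i = 0) ->
    \sum_i e i = 0 -> \sum_i e i *: v i = 0 -> (exists i, e i < 0) ->
    exists2 s : R, 0 < s & simplex_mixture x (fun i => lam i + s * e i).
  move=> e0 e_sum ev e_neg.
  have [s s_gt0 [ge0 supp_lt]] := nonneg_push_to_boundary lam_ge0 e0 e_neg.
  exists s => //; apply: IH; first exact: leq_trans supp_lt supp_lam.
  exact: convex_weights_shift.
have Nc0 i : lam i = 0 -> - c i = 0 by move/c0 ->; rewrite oppr0.
have Nc_sum : \sum_i - c i = 0 by rewrite sumrN c_sum oppr0.
have Ncv : \sum_i - c i *: v i = 0.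
  by under eq_bigr do rewrite scaleNr; rewrite sumrN cv oppr0.
have Nc_neg : exists i, - c i < 0.
  by apply: (sum_eq0_exists_neg (i0 := i0) Nc_sum); rewrite oppr_eq0.
have [s1 s1_gt0 mix1] := shift c c0 c_sum cv (sum_eq0_exists_neg c_sum ci0).
have [s2 s2_gt0 mix2] := shift _ Nc0 Nc_sum Ncv Nc_neg.
have s12 : 0 < s1 + s2 by rewrite addr_gt0.
apply: (simplex_mixture_conv (t := s2 / (s1 + s2)) mix1 mix2).
  rewrite divr_ge0 ?(ltW s2_gt0) ?(ltW s12) //=.
  by rewrite ler_pdivrMr // mul1r lerDr ltW.
by move=> i; field; rewrite gt_eqF.
Qed.

End Cage.

Theorem proposition1 (R : realFieldType) (d K : nat)
    (v : 'I_K -> 'rV[R]_d) (alpha : 'rV[R]_d -> 'I_K -> R) :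
  polytope_vertices v -> full_dimensional v -> valid_gbc v alpha ->
  forall x : 'rV[R]_d, in_cage v x ->
  exists w : {set 'I_K} -> R,
    [/\ forall T, 0 <= w T,
        forall T, w T != 0 -> nondeg_simplex v T /\ in_hull v T x,
        \sum_T w T = 1
      & forall i, alpha x i = \sum_T w T * cage_coords v T x i].
Proof.
move=> _ full [alpha_ge0 alpha_sum alpha_v _] x x_in.
apply: (convex_weights_simplex_mixture (x := x) full).
by split; [exact: alpha_ge0 | exact: alpha_sum | exact: alpha_v].
Qed.
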